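(* Let $d\ge3$ and let $T$ be the infinite $d$-regular tree with origin $o$. Index rotor directions as follows: at each vertex $v\neq o$ the neighbors of $v$ are labeled $1,\dots,d$ with label $d$ assigned to the parent of $v$ (its neighbor closer to $o$), and at $o$ the $d$ neighbors are labeled $1,\dots,d$ arbitrarily; a rotor pointing in direction $i$ advances to direction $i+1$ (with $d+1$ read as $1$). If initially every rotor points in direction $d-1$, then every chip in an infinite succession of chips started at $o$ (each performing rotor-router walk until it returns to $o$, rotors not reset) returns to $o$ in finitely many steps.
   Context: Rotor-router walk: a chip at vertex $v$ first advances the rotor at $v$ to the next direction and then moves to the neighbor in that direction. *)

From mathcomp Require Import all_boot.
Set Implicit Arguments. Unset Strict Implicit. Unset Printing Implicit Defensive.

(* Rotor directions are encoded 0-indexed: label i (1 <= i <= d) is the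
   natural number i-1 < d.  A vertex is the sequence of (0-indexed) labels
   followed from the origin o = [::]:
   - at o, the neighbour in direction i is [:: i];
   - at v <> o, direction d-1 (label d) is the parent (v with its last entry
     removed), and direction i < d-1 is the child rcons v i.
   Every labelling as in the paper is isomorphic to this one. *)

Definition vertex := seq nat.
Definition origin : vertex := [::].

Definition nbr (d : nat) (v : vertex) (i : nat) : vertex :=
  match v with
  | [::] => [:: i]
  | x :: s => if i == d.-1 then belast x s else rcons v i
  end.

Definition config := ((vertex -> nat) * vertex)%type.

Definition step (d : nat) (c : config) : config :=
  let: (rho, v) := c in
  let r := (rho v).+1 %% d in
  ((fun w => if w == v then r else rho w), nbr d v r).

Definition init (d : nat) : config := (fun _ => d - 2, origin).

(* Rotors are never reset and each chip starts at o where the previous one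
   stopped, so the successive chips together perform one rotor walk from o. *)
Definition walk (d : nat) (n : nat) : config := iter n (step d) (init d).

Definition returns_upto (d n : nat) : nat :=
  count (fun t => (walk d t).2 == origin) (iota 1 n).

From mathcomp Require Import all_boot.

(* Write d = n+3.  Away from o, direction n+2 (label d) points to the parent,
   directions 0..n+1 to the children, and the initial direction n+1 (label
   d-1) is the last child.  Call the subtree of v "explored m times" when
   m = 0 and all its rotors are initial, or m > 0, the rotor of v points to
   the parent and every child subtree is explored m-1 times.

   Key lemma ([excursion]): a chip entering a subtree explored m times
   leaves it after finitely many steps, towards the parent, leaving the
   subtree explored m+1 times and every rotor outside it untouched.  The
   proof is by induction on m: the chip visits the children 0, ..., n+1 in
   turn (each visit is an excursion for m-1) and then exits.  At o every
   child subtree is always explored some number of times, so each chip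
   leaving o performs one excursion and comes back; iterating gives the
   theorem. *)

Section RotorTree.

Variable n : nat.
Local Notation d := n.+3.

Fixpoint explored (rho : vertex -> nat) (v : vertex) (m : nat) : Prop :=
  match m with
  | 0 => forall w, prefix v w -> rho w = n.+1
  | m'.+1 => rho v = n.+2 /\ forall i, i < n.+2 -> explored rho (rcons v i) m'
  end.

(* Vertices below [v] are exactly the sequences having [v] as a prefix. *)
Lemma prefix_child_sub (v w : vertex) i : prefix (rcons v i) w -> prefix v w.
Proof. by rewrite -cats1; apply: catl_prefix. Qed.

Lemma child_not_prefix (v : vertex) i : ~~ prefix (rcons v i) v.
Proof.
apply/prefixP=> -[s /(congr1 size)]; rewrite size_cat size_rcons => /eqP.
by rewrite eqn_leq ltnNge leq_addr andbF.
Qed.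

Lemma sibling_subtrees_disjoint {v w : vertex} {i j : nat} :
  prefix (rcons v i) w -> prefix (rcons v j) w -> i = j.
Proof.
move=> /prefixP[s ->] /prefixP[s']; rewrite -!cats1 -!catA /=.
by move=> /(congr1 (nth 0 ^~ (size v))); rewrite !nth_cat ltnn subnn.
Qed.

Lemma nbr_parent (p : vertex) a : nbr d (rcons p a) n.+2 = p.
Proof. by case: p => [|y q] /=; rewrite eqxx // belast_rcons. Qed.

Lemma nbr_child (v : vertex) i : i < n.+2 -> nbr d v i = rcons v i.
Proof. by case: v => [|x s] //= Hi; rewrite ltn_eqF. Qed.

Definition setrotor (rho : vertex -> nat) (v : vertex) (r : nat) : vertex -> nat :=
  fun w => if w == v then r else rho w.

Lemma step_next rho v : rho v < n.+2 ->
  step d (rho, v) = (setrotor rho v (rho v).+1, nbr d v (rho v).+1).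
Proof. by move=> lt_rv; rewrite /step modn_small. Qed.

Lemma step_wrap rho v : rho v = n.+2 ->
  step d (rho, v) = (setrotor rho v 0, nbr d v 0).
Proof. by rewrite /step => ->; rewrite modnn. Qed.

Lemma explored_local m : forall rho rho' v, explored rho v m ->
  (forall w, prefix v w -> rho' w = rho w) -> explored rho' v m.
Proof.
elim: m => [|m IH] rho rho' v /= Hv E.
  by move=> w vw; rewrite E // Hv.
case: Hv => rv Hc; split; first by rewrite E ?prefix_refl.
move=> i Hi; apply: IH (Hc i Hi) _ => w cw.
by apply: E; apply: prefix_child_sub cw.
Qed.

Lemma explored_setrotor {rho : vertex -> nat} {v u : vertex} {r m : nat} :
  ~~ prefix v u -> explored rho v m -> explored (setrotor rho u r) v m.
Proof.
move=> vu Hv; apply: explored_local Hv _ => w vw.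
by rewrite /setrotor; case: eqP => // wu; rewrite -wu vw in vu.
Qed.

Definition agree_off (v : vertex) (rho rho' : vertex -> nat) : Prop :=
  forall w, ~~ prefix v w -> rho' w = rho w.

Definition excursion_ok (m : nat) : Prop :=
  forall p a rho, explored rho (rcons p a) m ->
  exists t rho', iter t (step d) (rho, rcons p a) = (rho', p) /\
    explored rho' (rcons p a) m.+1 /\ agree_off (rcons p a) rho rho'.

(* An untouched subtree is left after one step, through the parent. *)
Lemma excursion_base : excursion_ok 0.
Proof.
move=> p a rho Hv; set v := rcons p a in Hv *.
have rv : rho v = n.+1 by apply: Hv; apply: prefix_refl.
exists 1, (setrotor rho v n.+2); split.
  by rewrite iterS [iter 0 _ _]/= step_next rv // nbr_parent.
split; first split.
- by rewrite /setrotor eqxx.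
- move=> i _; apply: explored_setrotor (child_not_prefix v i) _ => w cw.
  by apply: Hv; apply: prefix_child_sub cw.
- by move=> w vw; rewrite /setrotor; case: eqP => // wv; rewrite wv prefix_refl in vw.
Qed.

Section Sweep.

Variable m : nat.
Hypothesis IH : excursion_ok m.

Definition children_at (rho : vertex -> nat) (v : vertex) (j : nat) : Prop :=
  forall i, i < n.+2 -> explored rho (rcons v i) (if i < j then m.+1 else m).

Lemma visit_child {v : vertex} {j : nat} {rho : vertex -> nat} :
  j < n.+2 -> rho v = j -> children_at rho v j ->
  exists t rho', iter t.+1 (step d) (rho, rcons v j) = (rho', nbr d v j.+1) /\
    rho' v = j.+1 /\ children_at rho' v j.+1 /\ agree_off v rho rho'.
Proof.
move=> lt_j_d rv ch.
have := ch j lt_j_d; rewrite ltnn => /IH[t [rho2 [E2 [S2 O2]]]].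
have rv2 : rho2 v = j by rewrite O2 ?child_not_prefix.
exists t, (setrotor rho2 v j.+1); split; first by rewrite iterS E2 step_next rv2.
split; first by rewrite /setrotor eqxx.
have off_v w : ~~ prefix (rcons v j) w -> w != v -> setrotor rho2 v j.+1 w = rho w.
  by move=> cw /negbTE wv; rewrite /setrotor wv O2.
split=> [i lt_i_d|w vw].
  case: (eqVneq i j) => [->|ij].
    by rewrite ltnSn; exact: explored_setrotor (child_not_prefix v j) S2.
  rewrite ltnS leq_eqVlt (negbTE ij) /=.
  apply: explored_local (ch i lt_i_d) _ => w iw; apply: off_v.
    by apply/negP=> jw; rewrite (sibling_subtrees_disjoint iw jw) eqxx in ij.
  by apply/eqP=> wv; move: iw; rewrite wv (negbTE (child_not_prefix v i)).
apply: off_v; first by apply: contra vw; apply: prefix_child_sub.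
by apply/eqP=> wv; rewrite wv prefix_refl in vw.
Qed.

Lemma sweep p a : let v := rcons p a in
  forall k j rho, j + k = n.+1 -> rho v = j -> children_at rho v j ->
  exists t rho', iter t (step d) (rho, rcons v j) = (rho', p) /\
    explored rho' v m.+2 /\ agree_off v rho rho'.
Proof.
move=> v; elim=> [|k IHk] j rho jk rv ch.
  rewrite addn0 in jk; rewrite {}jk in rv ch *.
  have [t [rho' [E [R [C A]]]]] := visit_child (ltnSn _) rv ch.
  exists t.+1, rho'; split; first by rewrite E nbr_parent.
  by split=> //; split=> // i Hi; have := C i Hi; rewrite Hi.
have lt_j : j < n.+1 by rewrite -jk addnS ltnS leq_addr.
have [t [rho3 [E3 [R3 [C3 A3]]]]] := visit_child (ltnW lt_j) rv ch.
have jk' : j.+1 + k = n.+1 by rewrite addSnnS.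
have [t2 [rho' [E' [S' A']]]] := IHk j.+1 rho3 jk' R3 C3.
exists (t2 + t.+1), rho'; split; first by rewrite iterD E3 nbr_child.
by split=> // w vw; rewrite A' // A3.
Qed.

Lemma excursion_step : excursion_ok m.+1.
Proof.
move=> p a rho [rv ch]; set v := rcons p a in rv ch *.
set rho1 := setrotor rho v 0.
have ch1 : children_at rho1 v 0.
  by move=> i Hi; rewrite ltn0; apply: explored_setrotor (child_not_prefix v i) (ch i Hi).
have r1 : rho1 v = 0 by rewrite /rho1 /setrotor eqxx.
have [t [rho' [E [S A]]]] := sweep p a n.+1 0 rho1 erefl r1 ch1.
exists t.+1, rho'; split; first by rewrite iterSr step_wrap // nbr_child.
split=> // w vw; rewrite A // /rho1 /setrotor.
by case: eqP => // wv; rewrite wv prefix_refl in vw.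
Qed.

End Sweep.

Lemma excursion m : excursion_ok m.
Proof. by elim: m => [|m IH]; [apply: excursion_base | apply: excursion_step]. Qed.

Definition settled (rho : vertex -> nat) : Prop :=
  forall i, i < d -> exists m, explored rho [:: i] m.

Lemma settled_init : settled (fun _ => n.+1).
Proof. by move=> i _; exists 0. Qed.

Lemma return_to_origin rho : settled rho ->
  exists t rho', iter t.+1 (step d) (rho, origin) = (rho', origin) /\ settled rho'.
Proof.
move=> G; set r := (rho origin).+1 %% d; set rho1 := setrotor rho origin r.
have [m Sm] := G r (ltn_pmod _ (isT : 0 < d)).
have S1 : explored rho1 [:: r] m by apply: explored_setrotor (child_not_prefix origin r) Sm.
have [t [rho' [E [S' A]]]] := excursion m [::] r rho1 S1.
exists t, rho'; split; first by rewrite iterSr.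
move=> i lt_i_d; case: (eqVneq i r) => [->|ir]; first by exists m.+1.
have [mi Si] := G i lt_i_d; exists mi.
apply: explored_local (explored_setrotor (r:=r) (child_not_prefix origin i) Si) _ => w iw.
by apply: A; apply/negP=> rw; rewrite (sibling_subtrees_disjoint iw rw) eqxx in ir.
Qed.

End RotorTree.

Lemma returns_uptoD d N t : returns_upto d (N + t) =
  returns_upto d N + count (fun s => (walk d s).2 == origin) (iota N.+1 t).
Proof. by rewrite /returns_upto iotaD count_cat add1n. Qed.

Lemma returns_uptoS d N :
  returns_upto d N.+1 = returns_upto d N + ((walk d N.+1).2 == origin).
Proof. by rewrite -[in LHS]addn1 returns_uptoD /= addn0. Qed.

Lemma returns_upto_increases d N M : (walk d M).2 == origin -> N < M ->
  returns_upto d N < returns_upto d M.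
Proof.
case: M => // M back; rewrite ltnS => le_NM; rewrite returns_uptoS back addn1 ltnS.
by rewrite -(subnKC le_NM) returns_uptoD leq_addr.
Qed.

(* By induction on k, after the first k+1 returns the configuration is
   settled, so by [return_to_origin] the next chip comes back as well. *)
Theorem mainTheorem10 (d : nat) (hd : 3 <= d) :
  forall k : nat, exists n : nat, k < returns_upto d n.
Proof.
case: d hd => [|[|[|n]]] // _.
have chips k : exists N rho,
    walk n.+3 N = (rho, origin) /\ settled n rho /\ k <= returns_upto n.+3 N.
  elim: k => [|k [N [rho [W [G L]]]]].
    by exists 0, (fun _ => n.+1); split; last split; [|apply: settled_init|].
  have [t [rho' [E G']]] := return_to_origin n rho G.
  have W' : walk n.+3 (t.+1 + N) = (rho', origin) by rewrite /walk iterD -/(walk _ _) W.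
  have more : returns_upto n.+3 N < returns_upto n.+3 (t.+1 + N).
    by apply: returns_upto_increases; rewrite ?W' // addSn ltnS leq_addl.
  by exists (t.+1 + N), rho'; split=> //; split=> //; apply: leq_ltn_trans L more.
by move=> k; have [N [_ [_ [_ L]]]] := chips k.+1; exists N.
Qed.
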